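(* Let ${\bm G}$ be a random matrix in $\mathbb{R}^{m\times n}$ with $\mathbb{E}[{\bm G}]={\bm M}$ and $\mathbb{E}[\|{\bm G}-{\bm M}\|_F^\alpha]\le\sigma^\alpha$ for some $\alpha\in(1,2]$, $\sigma>0$. Let $\tau>0$, $d=\min\{m,n\}$, and suppose $\|{\bm M}\|_F\le\tau/2$. Then $$\mathbb{E}\big[\|\mathcal{C}_\tau({\bm G})\|_F^2\big]\le 2\|{\bm M}\|_F^2+\big(2^\alpha d+3(2/3)^{\alpha-1}\big)\tau^{2-\alpha}\sigma^\alpha\le 2\|{\bm M}\|_F^2+8d\,\tau^{2-\alpha}\sigma^\alpha.$$
   Context: $\|\cdot\|_F$ is the Frobenius norm. Spectral clipping: for ${\bm G}\in\mathbb{R}^{m\times n}$ with (thin) SVD ${\bm G}={\bm U}\,\mathrm{diag}(\sigma_1,\dots,\sigma_d){\bm V}^\top$, $d=\min\{m,n\}$, and threshold $\tau>0$, define $\mathcal{C}_\tau({\bm G}):={\bm U}\,\mathrm{diag}(\min\{\sigma_1,\tau\},\dots,\min\{\sigma_d,\tau\}){\bm V}^\top$. *)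

From HB Require Import structures.
From mathcomp Require Import all_boot all_order all_algebra.
From mathcomp Require Import all_classical all_reals all_analysis.
Set Implicit Arguments. Unset Strict Implicit. Unset Printing Implicit Defensive.
Import Order.TTheory GRing.Theory Num.Theory.
Local Open Scope ring_scope.
Local Open Scope classical_set_scope.

Definition frob (R : realType) (m n : nat) (A : 'M[R]_(m, n)) : R :=
  Num.sqrt (\sum_(i < m) \sum_(j < n) A i j ^+ 2).

Definition is_thin_svd (R : realType) (m n : nat) (G : 'M[R]_(m, n))
  (U : 'M[R]_(m, minn m n)) (s : 'rV[R]_(minn m n)) (V : 'M[R]_(n, minn m n)) : Prop :=
  [/\ U^T *m U = 1%:M, V^T *m V = 1%:M, (forall k, 0 <= s 0 k)
    & G = U *m diag_mx s *m V^T].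

(* Spectral clipping C_tau(G) = U diag(min(sigma_i, tau)) V^T
   (the value does not depend on the chosen SVD; we pick one). *)
Definition spectral_clip (R : realType) (m n : nat) (tau : R) (G : 'M[R]_(m, n))
  : 'M[R]_(m, n) :=
  xget 0 [set C | exists U s V, is_thin_svd G U s V /\
      C = U *m diag_mx (\row_k Num.min (s 0 k) tau) *m V^T].

From HB Require Import structures.
From mathcomp Require Import all_boot all_order all_algebra.
From mathcomp Require Import all_classical all_reals all_analysis.
From mathcomp Require Import ring lra.
Set Implicit Arguments. Unset Strict Implicit. Unset Printing Implicit Defensive.
Import Order.TTheory GRing.Theory Num.Theory.
Local Open Scope ring_scope.
Local Open Scope classical_set_scope.

(* Write G = M + D with r = |D|_F. Clipping only shrinks singular values, so
   |C_tau(G)|^2 <= min(|G|^2, d tau^2), where |G|^2 = |M|^2 + 2<M,D> + r^2.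
   If r <= tau then r^2 <= tau^(2-alpha) r^alpha; if r > tau then
   d tau^2 <= d tau r <= d tau^(2-alpha) r^alpha, while |M| <= tau/2 gives
   2<M,D> >= -tau r >= -tau^(2-alpha) r^alpha.  Either way, for every K >= d + 1,
     |C_tau(G)|^2 <= 2|M|^2 + 2<M,D> + K tau^(2-alpha) r^alpha,
   and taking expectations kills the cross term because E[D] = 0.  The constant
   2^alpha d + 3 (2/3)^(alpha-1) lies between d + 1 and 8 d. *)

Section Frobenius.
Variables (R : realType) (m n : nat).
Implicit Types (A B : 'M[R]_(m, n)).

Definition frob_inner A B : R := \sum_(i < m) \sum_(j < n) A i j * B i j.

Lemma frob_ge0 A : 0 <= frob A.
Proof. exact: sqrtr_ge0. Qed.

Lemma sqr_frob A : frob A ^+ 2 = \sum_(i < m) \sum_(j < n) A i j ^+ 2.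
Proof.
rewrite /frob sqr_sqrtr // sumr_ge0 // => i _.
by rewrite sumr_ge0 // => j _; rewrite sqr_ge0.
Qed.

Lemma sqr_frob_tr A : frob A ^+ 2 = \tr (A *m A^T).
Proof.
rewrite sqr_frob; apply: eq_bigr => i _; rewrite mxE.
by apply: eq_bigr => j _; rewrite !mxE expr2.
Qed.

Lemma sqr_frobD A B : frob (A + B) ^+ 2 = frob A ^+ 2 + 2 * frob_inner A B + frob B ^+ 2.
Proof.
rewrite !sqr_frob /frob_inner mulr_sumr -!big_split; apply: eq_bigr => i _ /=.
rewrite mulr_sumr -!big_split; apply: eq_bigr => j _ /=.
by rewrite !mxE; ring.
Qed.

Lemma frob_inner_ge_AMGM A B (t : R) : 0 < t ->
  - (2 * frob_inner A B) <= t * frob A ^+ 2 + frob B ^+ 2 / t.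
Proof.
move=> t0; rewrite -subr_ge0 opprK !sqr_frob /frob_inner mulr_sumr mulr_suml.
rewrite mulr_sumr -!big_split sumr_ge0 // => i _ /=.
rewrite mulr_sumr mulr_sumr mulr_suml -!big_split sumr_ge0 // => j _ /=.
have -> : t * A i j ^+ 2 + B i j ^+ 2 / t + 2 * (A i j * B i j) =
    (t * A i j + B i j) ^+ 2 / t by field; rewrite gt_eqF.
by rewrite divr_ge0 ?sqr_ge0 ?ltW.
Qed.

End Frobenius.

Lemma sqr_frob_svd (R : realType) (m n k : nat) (U : 'M[R]_(m, k)) (s : 'rV[R]_k)
    (V : 'M[R]_(n, k)) :
  U^T *m U = 1%:M -> V^T *m V = 1%:M ->
  frob (U *m diag_mx s *m V^T) ^+ 2 = \sum_(l < k) s 0 l ^+ 2.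
Proof.
move=> UU VV; rewrite sqr_frob_tr !trmx_mul trmxK tr_diag_mx.
rewrite -!mulmxA (mulmxA V^T) VV mul1mx mxtrace_mulC -!mulmxA UU mulmx1.
by apply: eq_bigr => l _; rewrite mul_diag_mx !mxE eqxx mulr1n expr2.
Qed.

Lemma sqr_frob_spectral_clip_le (R : realType) (m n : nat) (tau : R) (G : 'M[R]_(m, n)) :
  0 < tau ->
  frob (spectral_clip tau G) ^+ 2 <= frob G ^+ 2 /\
  frob (spectral_clip tau G) ^+ 2 <= (minn m n)%:R * tau ^+ 2.
Proof.
move=> tau0; rewrite /spectral_clip; set svds := [set C | _].
have [[C svdC]|no_svd] := pselect (exists C, svds C); last first.
  (* no SVD is needed: the junk value 0 of [xget] satisfies both bounds *)
  rewrite xgetPN => [|C svdC]; last by apply: no_svd; exists C.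
  have -> : frob (0 : 'M[R]_(m, n)) = 0 by rewrite /frob big1 ?sqrtr0 // => i _;
    rewrite big1 // => j _; rewrite mxE expr0n.
  by rewrite expr0n /= sqr_ge0 mulr_ge0 ?sqr_ge0.
have [U [s [V [[UU VV s0 defG] ->]]]] := xgetPex 0 (ex_intro _ C svdC).
have min_le k :
    Num.min (s 0 k) tau ^+ 2 <= s 0 k ^+ 2 /\ Num.min (s 0 k) tau ^+ 2 <= tau ^+ 2.
  have min0 : 0 <= Num.min (s 0 k) tau by rewrite le_min s0 ltW.
  by split; rewrite lerXn2r ?nnegrE ?s0 ?(ltW tau0) ?ge_min ?lexx ?orbT.
rewrite defG !sqr_frob_svd //; split.
  by apply: ler_sum => k _; rewrite mxE; case: (min_le k).
rewrite -[in X in _ <= X * _](card_ord (minn m n)) -sumr_const mulr_suml.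
apply: ler_sum => k _.
by rewrite mxE mul1r; case: (min_le k).
Qed.

Section PowerInterpolation.
Variables (R : realType) (tau r a : R).

Lemma sqr_le_powR_interp : 0 <= r -> r <= tau -> a <= 2 ->
  r ^+ 2 <= tau `^ (2 - a) * r `^ a.
Proof.
move=> r0 r_le_tau a_le2.
have -> : r ^+ 2 = r `^ (2 - a) * r `^ a.
  by rewrite -powRD ?subrK ?pnatr_eq0 // -[2]/(2%:R) powR_mulrn.
rewrite ler_wpM2r ?powR_ge0 // ge0_ler_powR ?subr_ge0 // nnegrE //.
exact: le_trans r_le_tau.
Qed.

Lemma mul_le_powR_interp : 0 < tau -> tau <= r -> 1 <= a ->
  tau * r <= tau `^ (2 - a) * r `^ a.
Proof.
move=> tau0 tau_le_r a_ge1; set u := r / tau.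
have u_ge1 : 1 <= u by rewrite ler_pdivlMr // mul1r.
have r_eq : r = tau * u by rewrite mulrCA divff ?mulr1 // gt_eqF.
have -> : tau `^ (2 - a) * r `^ a = tau ^+ 2 * u `^ a.
  rewrite r_eq powRM ?(ltW tau0) ?(le_trans ler01 u_ge1) // mulrA.
  by rewrite -powRD ?subrK ?pnatr_eq0 // -[2]/(2%:R) powR_mulrn // ltW.
rewrite {1}r_eq mulrA -expr2 ler_wpM2l ?sqr_ge0 //; exact: le1r_powR.
Qed.

End PowerInterpolation.

Lemma frob_inner_ge_bounded (R : realType) (m n : nat) (tau : R) (A B : 'M[R]_(m, n)) :
  0 < tau -> frob A <= tau / 2 -> 0 < frob B -> - (tau * frob B) <= 2 * frob_inner A B.
Proof.
move=> tau0 A_small B0; set t := 2 * frob B / tau.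
have t0 : 0 < t by rewrite divr_gt0 ?mulr_gt0.
have sqrA : frob A ^+ 2 <= tau ^+ 2 / 4 by have := frob_ge0 A; nra.
have tA := ler_wpM2l (ltW t0) sqrA.
have tA_eq : t * (tau ^+ 2 / 4) = tau * frob B / 2 by rewrite /t; field; rewrite gt_eqF.
have tB_eq : frob B ^+ 2 / t = tau * frob B / 2 by rewrite /t; field; rewrite !gt_eqF.
have := frob_inner_ge_AMGM A B t0; lra.
Qed.

Lemma sqr_frob_spectral_clip_le_mean (R : realType) (m n : nat) (tau a K : R)
    (G M : 'M[R]_(m, n)) :
  0 < tau -> 1 < a -> a <= 2 -> frob M <= tau / 2 -> (minn m n)%:R + 1 <= K ->
  frob (spectral_clip tau G) ^+ 2 <=
  2 * frob M ^+ 2 + 2 * frob_inner M (G - M) + K * tau `^ (2 - a) * frob (G - M) `^ a.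
Proof.
move=> tau0 a_gt1 a_le2 M_small K_ge.
rewrite -mulrA; set r := frob (G - M); set p := tau `^ (2 - a) * r `^ a.
have p0 : 0 <= p by rewrite mulr_ge0 ?powR_ge0.
have r0 : 0 <= r := frob_ge0 _.
have d0 : 0 <= (minn m n)%:R :> R := ler0n _ _.
have sqrM0 := sqr_ge0 (frob M).
have [clip_le_G clip_le_tau] := sqr_frob_spectral_clip_le G tau0.
have := sqr_frobD M (G - M); rewrite [M + _]addrC subrK -/r => sqrG.
have Kp := ler_wpM2r p0 K_ge; have dp := mulr_ge0 d0 p0.
have [r_le_tau|tau_lt_r] := leP r tau.
  have := sqr_le_powR_interp r0 r_le_tau a_le2; rewrite -/p; lra.
have tau_r := mul_le_powR_interp tau0 (ltW tau_lt_r) (ltW a_gt1); rewrite -/p in tau_r.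
have sqr_tau : tau ^+ 2 <= p by rewrite expr2 (le_trans _ tau_r) // ler_wpM2l ?ltW.
have := ler_wpM2l d0 sqr_tau.
have := frob_inner_ge_bounded tau0 M_small (lt_trans tau0 tau_lt_r).
rewrite -/r; lra.
Qed.

Lemma ge0_le_integralT (R : realType) (dT : measure_display) (T : measurableType dT)
    (mu : {measure set T -> \bar R}) (f g : T -> \bar R) :
  (forall x, (0 <= f x)%E) -> (forall x, (f x <= g x)%E) ->
  (\int[mu]_x f x <= \int[mu]_x g x)%E.
Proof.
(* [spectral_clip] is chosen by [xget] and need not be measurable, hence no
   measurability here: both integrals are sups over the simple functions below. *)
move=> f0 fg; have g0 x : (0 <= g x)%E by apply: le_trans (fg x).
rewrite !ge0_integralTE //; apply: ereal_sup_le => _ [h /= hf <-].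
by exists h => //= x; exact: le_trans (hf x) (fg x).
Qed.

Lemma ge0_integrable_le (R : realType) (dT : measure_display) (T : measurableType dT)
    (mu : {measure set T -> \bar R}) (f : T -> R) (c : R) :
  measurable_fun setT f -> (forall x, 0 <= f x) ->
  (\int[mu]_x (f x)%:E <= c%:E)%E -> mu.-integrable setT (fun x => (f x)%:E).
Proof.
move=> mf f0 int_le; apply/integrableP; split.
  exact/measurable_realfun.measurable_EFinP.
under eq_integral do rewrite gee0_abs ?lee_fin //.
exact: le_lt_trans int_le (ltry _).
Qed.

Section Expectation.
Variables (R : realType) (dT : measure_display) (T : measurableType dT).
Variables (P : probability T R) (m n : nat) (G : T -> 'M[R]_(m, n)) (M : 'M[R]_(m, n)).
Hypothesis integrable_G : forall i j, P.-integrable setT (fun x => (G x i j)%:E).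
Hypothesis mean_G : forall i j, (\int[P]_x (G x i j)%:E = (M i j)%:E)%E.

Let measurable_G i j : measurable_fun setT (fun x => G x i j).
Proof. exact/measurable_realfun.measurable_EFinP/measurable_int/integrable_G. Qed.

Let integrable_centered i j :
  P.-integrable setT (fun x => ((G x i j)%:E - (M i j)%:E)%E).
Proof. exact: integrableB (integrable_G i j) (finite_measure_integrable_cst _ _ _). Qed.

Let frob_inner_centeredE (A : 'M[R]_(m, n)) x : (frob_inner A (G x - M))%:E =
  (\sum_(i < m) \sum_(j < n) (A i j)%:E * ((G x i j)%:E - (M i j)%:E))%E.
Proof.
rewrite -sumEFin; apply: eq_bigr => i _; rewrite -sumEFin.
by apply: eq_bigr => j _; rewrite !mxE.
Qed.

Lemma integrable_frob_inner_centered (A : 'M[R]_(m, n)) :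
  P.-integrable setT (fun x => (frob_inner A (G x - M))%:E).
Proof.
under eq_fun do rewrite frob_inner_centeredE.
apply: integrable_sum => // i _; apply: integrable_sum => // j _.
exact: integrableZl.
Qed.

Lemma integral_frob_inner_centered (A : 'M[R]_(m, n)) :
  (\int[P]_x (frob_inner A (G x - M))%:E = 0)%E.
Proof.
under eq_integral do rewrite frob_inner_centeredE.
rewrite integral_sum // => [|i]; last first.
  by apply: integrable_sum => // j _; exact: integrableZl.
rewrite big1 // => i _; rewrite integral_sum // => [|j]; last exact: integrableZl.
rewrite big1 // => j _; rewrite integralZl //.
rewrite integralB //; last exact: finite_measure_integrable_cst.
rewrite mean_G integral_cst // [X in (_ - _ * X)%E](_ : _ = 1%E).
  by rewrite mule1 subee // mule0.
exact: probability_setT.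
Qed.

Lemma measurable_frob_centered_powR (a : R) :
  measurable_fun setT (fun x => frob (G x - M) `^ a).
Proof.
have frob_powR x : frob (G x - M) `^ a =
    (\sum_(i < m) \sum_(j < n) (G x i j - M i j) ^+ 2) `^ (2^-1 * a).
  rewrite powRrM powR12_sqrt; last first.
    by rewrite sumr_ge0 // => i _; rewrite sumr_ge0 // => j _; rewrite sqr_ge0.
  rewrite /frob; congr (Num.sqrt _ `^ _).
  by apply: eq_bigr => i _; apply: eq_bigr => j _; rewrite !mxE.
have measurable_sqr : measurable_fun setT
    (fun x => \sum_(i < m) \sum_(j < n) (G x i j - M i j) ^+ 2).
  apply: measurable_sum => i; apply: measurable_sum => j.
  exact/measurable_realfun.measurable_funX/measurable_realfun.measurable_funB.
rewrite (funext frob_powR).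
exact: measurableT_comp (measurable_realfun.measurable_powR _) measurable_sqr.
Qed.

Lemma integral_centered_affine_le (a b c s : R) : 0 <= c ->
  (\int[P]_x (frob (G x - M) `^ a)%:E <= s%:E)%E ->
  (\int[P]_x (b + 2 * frob_inner M (G x - M) + c * frob (G x - M) `^ a)%:E
    <= (b + c * s)%:E)%E.
Proof.
move=> c0 moment_le.
have int_powR := ge0_integrable_le (measurable_frob_centered_powR a)
  (fun x => powR_ge0 _ _) moment_le.
have int_inner := integrable_frob_inner_centered M.
have int_cst : P.-integrable setT (fun _ => b%:E) :=
  finite_measure_integrable_cst _ _ measurableT.
under eq_integral do rewrite !EFinD !EFinM.
rewrite integralD //; last 2 first.
- by apply: integrableD => //; exact: integrableZl.
- exact: integrableZl.
rewrite integralD //; last exact: integrableZl.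
rewrite !integralZl // integral_frob_inner_centered mule0 adde0 integral_cst //.
rewrite [X in (_ * X)%E](_ : _ = 1%E); last exact: probability_setT.
by rewrite mule1 EFinD EFinM leeD2l // lee_wpmul2l ?lee_fin.
Qed.

End Expectation.

Lemma clip_constant_bounds (R : realType) (a d : R) : 1 <= d -> 1 < a -> a <= 2 ->
  d + 1 <= 2 `^ a * d + 3 * (2 / 3) `^ (a - 1) /\
  2 `^ a * d + 3 * (2 / 3) `^ (a - 1) <= 8 * d.
Proof.
move=> d_ge1 a_gt1 a_le2.
have pow2_ge2 : 2 <= 2 `^ a :> R by apply: le1r_powR; lra.
have pow2_le4 : 2 `^ a <= 4 :> R.
  have -> : 4 = 2 `^ 2 :> R by rewrite -[2 in RHS]/(2%:R) powR_mulrn //; lra.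
  by rewrite ler_powR //; lra.
have pow23_ge0 : 0 <= (2 / 3) `^ (a - 1) :> R := powR_ge0 _ _.
have pow23_le1 : (2 / 3) `^ (a - 1) <= 1 :> R.
  by rewrite -[X in _ <= X](powRr0 (2 / 3 : R)) ger_powR //; lra.
by split; nra.
Qed.

Theorem mainTheorem6 (R : realType) (dT : measure_display) (T : measurableType dT)
  (P : probability T R) (m n : nat) (G : T -> 'M[R]_(m, n)) (M : 'M[R]_(m, n))
  (alpha sigma tau : R) :
  (0 < m)%N -> (0 < n)%N ->
  (forall i j, P.-integrable setT (fun x => ((G x) i j)%:E)) ->
  (forall i j, (\int[P]_x ((G x) i j)%:E = (M i j)%:E)%E) ->
  1 < alpha -> alpha <= 2 -> 0 < sigma ->
  (\int[P]_x ((frob (G x - M)) `^ alpha)%:E <= (sigma `^ alpha)%:E)%E ->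
  0 < tau -> frob M <= tau / 2 ->
  let d := minn m n in
  (\int[P]_x ((frob (spectral_clip tau (G x))) ^+ 2)%:E
     <= (2 * frob M ^+ 2
         + (2 `^ alpha * d%:R + 3 * (2 / 3) `^ (alpha - 1))
           * tau `^ (2 - alpha) * sigma `^ alpha)%:E)%E /\
  2 * frob M ^+ 2
    + (2 `^ alpha * d%:R + 3 * (2 / 3) `^ (alpha - 1)) * tau `^ (2 - alpha) * sigma `^ alpha
  <= 2 * frob M ^+ 2 + 8 * d%:R * tau `^ (2 - alpha) * sigma `^ alpha.
Proof.
move=> m_gt0 n_gt0 integrable_G mean_G alpha_gt1 alpha_le2 _ moment_le tau_gt0 M_small d.
have d_ge1 : 1 <= d%:R :> R by rewrite ler1n leq_min m_gt0 n_gt0.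
have [K_ge K_le] := clip_constant_bounds d_ge1 alpha_gt1 alpha_le2.
set K := 2 `^ alpha * d%:R + _ in K_ge K_le *.
have tau_pow_ge0 : 0 <= tau `^ (2 - alpha) := powR_ge0 _ _.
have c_ge0 : 0 <= K * tau `^ (2 - alpha) by rewrite mulr_ge0 //; lra.
split.
  apply: le_trans _ (integral_centered_affine_le integrable_G mean_G
    (2 * frob M ^+ 2) c_ge0 moment_le).
  apply: ge0_le_integralT => x; rewrite lee_fin ?sqr_ge0 //.
  exact: sqr_frob_spectral_clip_le_mean.
have := ler_wpM2r (mulr_ge0 tau_pow_ge0 (powR_ge0 sigma alpha)) K_le.
by rewrite !mulrA; lra.
Qed.
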